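(* Let $(X,\|\cdot\|_X)$ be a Banach space and $\mathcal{K}\subset X$. If there exists $\gamma>0$ such that $\lim_{n\to\infty}d_n^\gamma(\mathcal{K})_X=0$, then $\mathcal{K}$ is totally bounded (i.e. its closure is compact).
   Context: $\mathcal{K}$ is totally bounded if for every $\varepsilon>0$ it is covered by finitely many closed balls of radius $\varepsilon$. For $k\ge1$ and a norm $\|\cdot\|_{Y_k}$ on $\mathbb{R}^k$ let $B_{Y_k}=\{y\in\mathbb{R}^k:\|y\|_{Y_k}\le1\}$. For $\gamma\ge0$, the fixed Lipschitz width is $d^\gamma(\mathcal{K},Y_k)_X=\inf_{\Phi}\sup_{f\in\mathcal{K}}\inf_{y\in B_{Y_k}}\|f-\Phi(y)\|_X\in[0,\infty]$, the infimum being over all maps $\Phi:B_{Y_k}\to X$ with $\|\Phi(y)-\Phi(y')\|_X\le\gamma\|y-y'\|_{Y_k}$ for all $y,y'\in B_{Y_k}$. The Lipschitz width is $d_n^\gamma(\mathcal{K})_X=\inf_{1\le k\le n}\inf_{\|\cdot\|_{Y_k}}d^\gamma(\mathcal{K},Y_k)_X$, where the inner infimum is over all norms on $\mathbb{R}^k$. *)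

From mathcomp Require Import all_boot all_order all_algebra.
From mathcomp Require Import all_classical all_reals all_analysis.
Set Implicit Arguments. Unset Strict Implicit. Unset Printing Implicit Defensive.
Import Order.TTheory GRing.Theory Num.Theory.
Import numFieldNormedType.Exports.
Local Open Scope classical_set_scope.
Local Open Scope ring_scope.

Definition is_norm (R : realType) (k : nat) (N : 'rV[R]_k -> R) : Prop :=
  [/\ forall y, 0 <= N y,
      forall y, N y = 0 -> y = 0,
      forall (a : R) y, N (a *: y) = `|a| * N y
    & forall y y', N (y + y') <= N y + N y'].

Definition unit_ball (R : realType) (k : nat) (N : 'rV[R]_k -> R) : set 'rV[R]_k :=
  [set y | N y <= 1].

Definition lipschitz_on_ball (R : realType) (X : normedModType R) (k : nat)
    (N : 'rV[R]_k -> R) (gamma : R) (Phi : 'rV[R]_k -> X) : Prop :=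
  forall y y', unit_ball N y -> unit_ball N y' ->
    `|Phi y - Phi y'| <= gamma * N (y - y').

(* sup_{f in K} inf_{y in B} ||f - Phi y||, as an element of [0, +oo]
   (0 is added to the set so that the supremum over an empty K is 0). *)
Definition approx_error (R : realType) (X : normedModType R) (K : set X) (k : nat)
    (N : 'rV[R]_k -> R) (Phi : 'rV[R]_k -> X) : \bar R :=
  ereal_sup (0%E |` [set ereal_inf [set (`|f - Phi y|)%:E | y in unit_ball N]
                    | f in K]).

Definition fixed_lip_width (R : realType) (X : normedModType R) (K : set X)
    (gamma : R) (k : nat) (N : 'rV[R]_k -> R) : \bar R :=
  ereal_inf [set approx_error K N Phi | Phi in lipschitz_on_ball N gamma].

Definition lip_width (R : realType) (X : normedModType R) (K : set X)
    (gamma : R) (n : nat) : \bar R :=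
  ereal_inf [set e | exists k : nat, exists N : 'rV[R]_k -> R,
      [/\ (1 <= k)%N, (k <= n)%N, is_norm N & e = fixed_lip_width K gamma N]].

Definition totally_bounded_set (R : realType) (X : normedModType R) (K : set X) : Prop :=
  forall eps : R, 0 < eps ->
    exists s : seq X, forall f, K f -> exists2 c, c \in s & `|f - c| <= eps.

(* If d_n^gamma(K) < e, then K lies within e of Phi(B) for a gamma-Lipschitz
   Phi on the unit ball B of some norm on R^k.  All norms on R^k are
   equivalent to the sup norm, so B is compact and has a finite
   (d/gamma)-net; its image under Phi is then a finite (e + d)-net of K. *)

From mathcomp Require Import all_boot all_order all_algebra.
From mathcomp Require Import all_classical all_reals all_analysis.
From mathcomp Require Import lra.
Import Order.TTheory GRing.Theory Num.Theory.
Import numFieldNormedType.Exports. Import Num.Def.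
Local Open Scope classical_set_scope.
Local Open Scope ring_scope.

Lemma mx_entry_le_norm (R : realDomainType) (m n : nat) (x : 'M[R]_(m, n)) i j :
  `|x i j| <= `|x|.
Proof.
have /mapP[ij _ ->] : `|x i j| \in [seq `|x ij.1 ij.2| | ij : 'I_m * 'I_n].
  by apply/mapP; exists (i, j) => //; rewrite mem_enum.
by rewrite [leRHS]/normr /= mx_normrE; apply/bigmax_geP; right; exists ij.
Qed.

Section NormOnRows.
Context {R : realType} {k : nat} {N : 'rV[R]_k -> R}.
Hypothesis hN : is_norm N.

Lemma is_norm0 : N 0 = 0.
Proof. by case: hN => _ _ NZ _; rewrite -(scale0r 0) NZ normr0 mul0r. Qed.

Lemma is_normN y : N (- y) = N y.
Proof. by case: hN => _ _ NZ _; rewrite -scaleN1r NZ normrN normr1 mul1r. Qed.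

Lemma is_norm_sum (I : Type) (r : seq I) (F : I -> 'rV[R]_k) :
  N (\sum_(i <- r) F i) <= \sum_(i <- r) N (F i).
Proof.
case: hN => _ _ _ ND; elim: r => [|a r IH]; first by rewrite !big_nil is_norm0.
by rewrite !big_cons; apply: le_trans (ND _ _) _; exact: lerD.
Qed.

Lemma is_norm_dist x y : `|N x - N y| <= N (x - y).
Proof.
case: hN => _ _ _ ND.
have Nx : N x <= N (x - y) + N y by rewrite -{1}(subrK y x) ND.
have Ny : N y <= N (x - y) + N x.
  by rewrite -(is_normN (x - y)) opprB -{1}(subrK x y) ND.
by rewrite ler_norml; apply/andP; split; lra.
Qed.

Lemma is_norm_le_mx_norm : exists2 C, 0 < C & forall y, N y <= C * `|y|.
Proof.
case: hN => N_ge0 _ NZ _.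
exists (1 + \sum_(i < k) N (delta_mx 0 i)).
  by rewrite ltr_pwDl // sumr_ge0.
move=> y; rewrite {1}(row_sum_delta y); apply: le_trans (is_norm_sum _ _ _) _.
rewrite mulrDl mul1r -[X in X <= _]add0r lerD // mulr_suml.
apply: ler_sum => i _; rewrite NZ mulrC ler_wpM2l //.
exact: mx_entry_le_norm.
Qed.

Lemma continuous_is_norm_subr (c : 'rV[R]_k) :
  continuous (fun z : 'rV[R]_k => N (z - c)).
Proof.
have [C C0 NC] := is_norm_le_mx_norm.
move=> x; apply/(@cvgrPdist_lt _ _ _ (nbhs x) (nbhs_filter x)) => e e0; near=> y.
apply: le_lt_trans (is_norm_dist _ _) _.
rewrite opprB addrA subrK; apply: le_lt_trans (NC _) _.
rewrite -ltr_pdivlMl // mulrC; near: y.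
by apply: (@cvgr_dist_lt _ _ _ (nbhs x) _ id); [exact: cvg_id | rewrite divr_gt0].
Unshelve. all: end_near.
Qed.

Lemma continuous_is_norm : continuous N.
Proof.
have -> : N = fun z => N (z - 0) by apply: funext => z; rewrite subr0.
exact: continuous_is_norm_subr.
Qed.

Lemma is_norm_ge_mx_norm : exists2 m, 0 < m & forall y, m * `|y| <= N y.
Proof.
case: hN => N_ge0 N_eq0 NZ _.
have [k0|k_gt0] := posnP k.
  exists 1 => // y; suff -> : y = 0 by rewrite normr0 mulr0 N_ge0.
  by apply/rowP => i; have := ltn_ord i; rewrite [X in (_ < X)%N]k0.
pose S := [set y : 'rV[R]_k | `|y| = 1].
have S0 : S !=set0.
  pose e := delta_mx 0 (Ordinal k_gt0) : 'rV[R]_k.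
  have e0 : `|e| != 0.
    rewrite normr_eq0; apply/eqP => /matrixP/(_ 0 (Ordinal k_gt0))/eqP.
    by rewrite !mxE !eqxx oner_eq0.
  by exists (`|e|^-1 *: e); rewrite /S /= normrZ normfV normr_id mulVf.
have cS : compact S.
  apply: bounded_closed_compact.
    by apply: filterS (nbhs_pinfty_ge (num_real 1)) => M M1 y /= ->.
  apply: (@preimage_closed _ _ (fun y : 'rV[R]_k => `|y|) [set x : R | x = 1]).
    by move=> y _; exact: norm_continuous.
  exact: closed_eq.
have [c Sc Nc_min] := EVT_min_rV S0 cS (continuous_subspaceT continuous_is_norm).
exists (N c).
  rewrite lt_def N_ge0 andbT; apply: contraTneq Sc => /N_eq0 ->.
  by rewrite notin_setE /S /= normr0 => /esym/eqP; rewrite oner_eq0.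
move=> y; have [->|y0] := eqVneq y 0; first by rewrite normr0 mulr0 N_ge0.
have ny : 0 < `|y| by rewrite normr_gt0.
have /Nc_min : `|y|^-1 *: y \in S.
  by rewrite inE /S /= normrZ normfV normr_id mulVf // gt_eqF.
by rewrite NZ normfV normr_id mulrC ler_pdivlMr.
Qed.

Lemma compact_unit_ball : compact (unit_ball N).
Proof.
have [m m0 Nm] := is_norm_ge_mx_norm.
apply: bounded_closed_compact.
  apply: filterS (nbhs_pinfty_ge (num_real m^-1)) => M mM y /= By.
  apply: le_trans mM; rewrite -[m^-1]mulr1 ler_pdivlMl //.
  exact: le_trans (Nm y) By.
apply: (@preimage_closed _ _ N [set x : R | x <= 1]); last exact: closed_le.
by move=> y _; exact: continuous_is_norm.
Qed.

Lemma unit_ball_finite_net (d : R) : 0 < d ->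
  exists2 s : seq 'rV[R]_k, (forall c, c \in s -> unit_ball N c) &
    forall y, unit_ball N y -> exists2 c, c \in s & N (y - c) < d.
Proof.
move=> d0.
have ball_open c : open [set z | N (z - c) < d].
  rewrite -[X in open X]/((fun z => N (z - c)) @^-1` [set x | x < d]).
  apply: open_comp; last exact: open_lt.
  by move=> z _; exact: continuous_is_norm_subr.
have := compact_unit_ball; rewrite compact_cover.
case/(_ _ (unit_ball N) (fun c => [set z | N (z - c) < d]) (fun c _ => ball_open c)).
  by move=> y By; exists y => //=; rewrite subrr is_norm0.
move=> D DB cover; exists (finmap.enum_fset D).
  by move=> c /DB; rewrite inE.
by move=> y /cover[c Dc yc]; exists c.
Qed.

End NormOnRows.

Section ApproximationByLipschitzMaps.
Context {R : realType} {X : normedModType R} {K : set X}.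

Lemma approx_error_lt {k} {N : 'rV[R]_k -> R} {Phi : 'rV[R]_k -> X} {e : R} {f : X} :
  (approx_error K N Phi < e%:E)%E -> K f ->
  exists2 y, unit_ball N y & `|f - Phi y| < e.
Proof.
move=> errK Kf.
have : (ereal_inf [set (`|f - Phi y|)%:E | y in unit_ball N] < e%:E)%E.
  by apply: le_lt_trans errK; apply: ereal_sup_ubound; right; exists f.
by move=> /ereal_inf_lt[_ [y By <-]]; rewrite lte_fin; exists y.
Qed.

Lemma lip_width_lt {gamma e : R} {n} : (lip_width K gamma n < e%:E)%E ->
  exists k (N : 'rV[R]_k -> R) (Phi : 'rV[R]_k -> X),
    [/\ is_norm N, lipschitz_on_ball N gamma Phi & (approx_error K N Phi < e%:E)%E].
Proof.
move=> /ereal_inf_lt[_ [k [N [_ _ normN ->]]]].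
by move=> /ereal_inf_lt[_ [Phi lipPhi <-]] errK; exists k, N, Phi.
Qed.

Lemma lipschitz_approx_finite_net {k} {N : 'rV[R]_k -> R} {Phi : 'rV[R]_k -> X}
    {gamma e d : R} :
  is_norm N -> 0 < gamma -> lipschitz_on_ball N gamma Phi ->
  (approx_error K N Phi < e%:E)%E -> 0 < d ->
  exists s : seq X, forall f, K f -> exists2 c, c \in s & `|f - c| < e + d.
Proof.
move=> normN gamma0 lipPhi errK d0.
have [s sB snet] := unit_ball_finite_net normN _ (divr_gt0 d0 gamma0).
exists [seq Phi c | c <- s] => f Kf.
have [y By fy] := approx_error_lt errK Kf.
have [c cs yc] := snet y By.
exists (Phi c); first exact: map_f.
rewrite -(subrK (Phi y) f) -addrA; apply: le_lt_trans (ler_normD _ _) _.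
apply: ltrD => //; apply: le_lt_trans (lipPhi _ _ By (sB c cs)) _.
by rewrite -ltr_pdivlMl // mulrC.
Qed.

End ApproximationByLipschitzMaps.

Theorem lemma2p9 (R : realType) (X : completeNormedModType R) (K : set X) :
  (exists gamma : R, 0 < gamma /\
     (fun n : nat => lip_width K gamma n) @ \oo --> (0 : \bar R)%E) ->
  totally_bounded_set K.
Proof.
move=> [gamma [gamma0 width_to0]] eps eps0.
have eps2 : 0 < eps / 2 by rewrite divr_gt0.
have [n _ /(_ n (leqnn n)) widthn] :
    \forall n \near \oo, (lip_width K gamma n < (eps / 2)%:E)%E.
  apply: (width_to0 [set x | (x < (eps / 2)%:E)%E]).
  by apply: open_ereal_lt'; rewrite lte_fin.
have [k [N [Phi [normN lipPhi errK]]]] := lip_width_lt widthn.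
have [s net] := lipschitz_approx_finite_net normN gamma0 lipPhi errK eps2.
exists s => f /net[c cs fc]; exists c => //.
by rewrite [eps]splitr ltW.
Qed.
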